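(* Let $p$ be a set partition with $N(p)\ge 3$ distinct letters and length $|p|\le 2N(p)$. If $\phi_{aba}^{N(p)-1}(p)$ is not sorted, then $p$ is equivalent to the set partition $(a_1a_2\cdots a_{N(p)})^2 = a_1a_2\cdots a_{N(p)}a_1a_2\cdots a_{N(p)}$, where $a_1,\dots,a_{N(p)}$ are distinct letters.
   Context: A set partition is a finite word $p=p_1p_2\cdots p_n$ over an alphabet $A$ (letters may repeat). Its length is $|p|=n$ and $N(p)$ denotes the number of distinct letters occurring in $p$. A set partition is sorted if, for every letter, all occurrences of that letter appear consecutively. Two set partitions $p=p_1\cdots p_n$ and $q=q_1\cdots q_n$ are equivalent if there is a bijection $f:A\to A$ with $q=f(p_1)f(p_2)\cdots f(p_n)$. A word contains the pattern $aba$ if it has a (not necessarily contiguous) subsequence $xyz$ with $x=z\neq y$; otherwise it avoids $aba$. The map $\phi_{aba}$ (Xia's deterministic stack-sorting map for set partitions) is defined as follows. Start with the input $p$, an empty stack, and an empty output. Repeat: if the input is nonempty and pushing its leftmost letter onto the top of the stack would leave the stack contents (read from top to bottom) avoiding the pattern $aba$, then remove that letter from the input and push it onto the stack; otherwise pop the top letter of the stack and append it to the right end of the output. Stop when both input and stack are empty; $\phi_{aba}(p)$ is the output word. For example, $\phi_{aba}(abcac)=cbcaa$. $\phi_{aba}^k$ denotes the $k$-fold iterate. *)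

From mathcomp Require Import all_boot.
Set Implicit Arguments. Unset Strict Implicit. Unset Printing Implicit Defensive.

(* A set partition is a word p : seq A over an alphabet A (an eqType). *)

Definition Nletters (A : eqType) (p : seq A) : nat := size (undup p).

Definition contains_aba (A : eqType) (w : seq A) : bool :=
  has (fun xy : A * A => (xy.1 != xy.2) && subseq [:: xy.1; xy.2; xy.1] w)
      [seq (x, y) | x <- w, y <- w].

Definition avoids_aba (A : eqType) (w : seq A) : bool := ~~ contains_aba w.

Definition sorted_sp (A : eqType) (p : seq A) : Prop :=
  forall (x : A) (i j k : nat), i < j -> j < k -> k < size p ->
    nth x p i = x -> nth x p k = x -> nth x p j = x.

Definition sp_equiv (A : eqType) (p q : seq A) : Prop :=
  exists f : A -> A, bijective f /\ q = map f p.

(* One step of the stack-sorting machine.  State = (input, stack, output);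
   the stack is a list whose head is the top. *)
Definition phi_step (A : eqType) (st : seq A * seq A * seq A)
  : seq A * seq A * seq A :=
  let: (inp, stk, out) := st in
  match inp with
  | x :: inp' =>
      if avoids_aba (x :: stk) then (inp', x :: stk, out)
      else match stk with
           | y :: stk' => (inp, stk', rcons out y)
           | [::] => st
           end
  | [::] =>
      match stk with
      | y :: stk' => (inp, stk', rcons out y)
      | [::] => st
      end
  end.

(* Every letter is pushed once and popped once, so exactly 2|p| steps
   empty both input and stack; further steps are the identity. *)
Definition phi_aba (A : eqType) (p : seq A) : seq A :=
  (iter (2 * size p) (@phi_step A) (p, [::], [::])).2.

From mathcomp Require Import all_boot.
From mathcomp Require Import zify.
Set Implicit Arguments. Unset Strict Implicit. Unset Printing Implicit Defensive.

(* Call a letter sorted in w when its occurrences in w are consecutive. The stack-sorting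
   map phi never unsorts a sorted letter and, as long as w is not sorted, it sorts at least
   one new letter. Hence if phi^(N-1)(p) is still unsorted, all N letters of p are unsorted,
   so each occurs at least twice and, as |p| <= 2N, exactly twice; moreover each pass sorts
   exactly one letter. Reading the passes backwards from the sorted word, one then shows
   that the subword of unsorted letters is always a square t t with t duplicate-free.
   Sorted leading blocks do not matter; if the first letter a of w is unsorted, then
   w = a w1 a w2 and the pass sorts a, so it sorts nothing else: every other unsorted letter
   then occurs once in w1 and once in w2, phi reverses the unsorted subwords of w1 and w2,
   and the unsorted subword of phi(w) being a square forces them to be equal. At the first
   stage, the unsorted subword is p itself. *)

Section Contiguous.
Variable A : eqType.
Implicit Types (x y a : A) (u v w r : seq A).

Definition contiguous x w : bool :=
  take (count_mem x w) (drop (index x w) w) == nseq (count_mem x w) x.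

Lemma notin_take_index x w : x \notin take (index x w) w.
Proof. by rewrite in_take_leq ?index_size // ltnn. Qed.

Lemma split_first x w : x \in w -> exists u v, w = u ++ x :: v /\ x \notin u.
Proof.
move=> xw; exists (take (index x w) w), (drop (index x w).+1 w); split.
  by rewrite -{1}(cat_take_drop (index x w) w) (drop_nth x) ?index_mem // nth_index.
exact: notin_take_index.
Qed.

Lemma contiguousP x w :
  reflect (exists u n v, w = u ++ nseq n x ++ v /\ x \notin u /\ x \notin v)
          (contiguous x w).
Proof.
apply: (iffP idP).
  rewrite /contiguous => /eqP H.
  set i := index x w in H *; set c := count_mem x w in H *.
  exists (take i w), c, (drop c (drop i w)).
  have E : w = take i w ++ nseq c x ++ drop c (drop i w).
    by rewrite -H cat_take_drop cat_take_drop.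
  split => //; split; first exact: notin_take_index.
  apply/count_memPn.
  have := congr1 (count_mem x) E.
  rewrite !count_cat (count_memPn (notin_take_index x w)) count_nseq /= eqxx mul1n.
  by rewrite -/c add0n => /eqP; rewrite -{1}[c]addn0 eqn_add2l => /eqP <-.
case=> u [[|n] [v [-> [xu xv]]]].
  by rewrite /contiguous /= !count_cat (count_memPn xu) (count_memPn xv) /= take0.
rewrite /contiguous !count_cat (count_memPn xu) (count_memPn xv) count_nseq /= eqxx.
rewrite mul1n add0n addn0 index_cat (negbTE xu) /= eqxx addn0 drop_size_cat //.
by rewrite -[x :: _ ++ v]/(nseq n.+1 x ++ v) take_size_cat ?size_nseq.
Qed.

Lemma notin_contiguous x w : x \notin w -> contiguous x w.
Proof. by move=> H; apply/contiguousP; exists w, 0, [::]; rewrite /= cats0. Qed.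

Lemma contiguous_catl x u v : x \notin u -> contiguous x (u ++ v) = contiguous x v.
Proof.
move=> xu; rewrite /contiguous count_cat (count_memPn xu) add0n index_cat (negbTE xu).
by rewrite drop_cat ltnNge leq_addr /= addKn.
Qed.

Lemma contiguous_rev x w : contiguous x (rev w) = contiguous x w.
Proof.
suff H w' : contiguous x w' -> contiguous x (rev w').
  by apply/idP/idP => /H //; rewrite revK.
case/contiguousP=> u [n [v [-> [xu xv]]]]; apply/contiguousP.
exists (rev v), n, (rev u); rewrite !rev_cat rev_nseq catA !mem_rev.
by split.
Qed.

Lemma contiguous_catr x u v : x \notin v -> contiguous x (u ++ v) = contiguous x u.
Proof.
by move=> xv; rewrite -contiguous_rev rev_cat contiguous_catl ?mem_rev // contiguous_rev.
Qed.

Lemma contiguous_nseq x n y : contiguous x (nseq n y).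
Proof.
have [->|xy] := eqVneq x y.
  by apply/contiguousP; exists [::], n, [::]; rewrite cats0.
by apply: notin_contiguous; rewrite mem_nseq negb_and xy orbT.
Qed.

Lemma contiguous_nseq_cat x n y w :
  x != y -> contiguous x (nseq n y ++ w) = contiguous x w.
Proof. by move=> xy; rewrite contiguous_catl // mem_nseq negb_and xy orbT. Qed.

Lemma subseq_cons_catl x s u w :
  x \notin u -> subseq (x :: s) (u ++ w) = subseq (x :: s) w.
Proof.
elim: u => [//|z u IH] /=; rewrite in_cons negb_or => /andP [xz xu].
by rewrite (negbTE xz) IH.
Qed.

Lemma contiguous_aba x y w : contiguous x w -> subseq [:: x; y; x] w -> y = x.
Proof.
case/contiguousP=> u [n [v [-> [xu xv]]]].
rewrite subseq_cons_catl // -subseq_rev rev_cat /= subseq_cons_catl ?mem_rev //.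
rewrite rev_nseq => /mem_subseq /(_ y); rewrite !inE eqxx orbT => /(_ isT).
by rewrite mem_nseq => /andP [_ /eqP].
Qed.

Lemma contiguous_sep x y u v :
  contiguous x (u ++ y :: v) -> x != y -> x \in u -> x \notin v.
Proof.
move=> H xy xu; apply/negP => xv.
have S : subseq [:: x; y; x] (u ++ y :: v).
  by rewrite -[[:: x; y; x]]/([:: x] ++ [:: y; x]) cat_subseq ?sub1seq //= eqxx sub1seq.
by move: xy; rewrite (contiguous_aba H S) eqxx.
Qed.

Lemma nseq_cat_cons j a r : nseq j a ++ a :: r = nseq j.+1 a ++ r.
Proof. by elim: j => //= j ->. Qed.

Lemma contiguous_block_gap a j v r : 0 < j -> a \notin v ->
  contiguous a (nseq j a ++ v ++ a :: r) -> v = [::].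
Proof.
case: v => [//|y v] j0 av H; exfalso.
have ay : a != y by apply: contraNneq av => ->; rewrite inE eqxx.
have := contiguous_sep H ay; rewrite mem_nseq eqxx andbT => /(_ j0).
by rewrite mem_cat inE eqxx orbT.
Qed.

Lemma contiguous_cat_sep x a v r : x != a ->
  contiguous x (v ++ a :: r) -> contiguous x v && contiguous x r.
Proof.
move=> xa H; have [xv|xv] := boolP (x \in v).
  have xr := contiguous_sep H xa xv.
  by move: H; rewrite contiguous_catr ?inE ?negb_or ?xa // => ->; rewrite notin_contiguous.
rewrite notin_contiguous //=.
by move: H; rewrite contiguous_catl // -cat1s contiguous_catl // inE.
Qed.

Lemma contiguous_head a r : contiguous a (a :: r) ->
  exists k r', [/\ 0 < k, a :: r = nseq k a ++ r' & a \notin r'].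
Proof.
case/contiguousP=> [[|y u]] [k [v [E [au av]]]]; last first.
  by move: E au => [<- _]; rewrite inE eqxx.
case: k E => [|k] /= E; first by move: av; rewrite -E inE eqxx.
by exists k.+1, v.
Qed.

Lemma contiguous_count1 x w : count_mem x w <= 1 -> contiguous x w.
Proof.
have [xw|] := boolP (x \in w); last by move=> /notin_contiguous.
have [u [v [-> xu]]] := split_first xw.
rewrite count_cat (count_memPn xu) /= eqxx add0n add1n ltnS leqn0 => /eqP/count_memPn xv.
by apply/contiguousP; exists u, 1, v.
Qed.

Lemma noncontiguous_count x w : ~~ contiguous x w -> 1 < count_mem x w.
Proof. by apply: contraR; rewrite -leqNgt; apply: contiguous_count1. Qed.

Lemma sorted_sp_contiguous w : (forall x, contiguous x w) -> sorted_sp w.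
Proof.
move=> H x i j k ij jk kw ei ek.
have /contiguousP [u [m [v [E [xu xv]]]]] := H x.
have Hsz : size w = size u + m + size v by rewrite E !size_cat size_nseq addnA.
have ui : size u <= i.
  rewrite leqNgt; apply/negP => iu; move: ei; rewrite E nth_cat iu => ei.
  by move: xu; rewrite -{1}ei mem_nth.
have km : k < size u + m.
  rewrite ltnNge; apply/negP => mk; move: ek; rewrite E nth_cat ltnNge.
  rewrite (leq_trans (leq_addr m _) mk) /= nth_cat size_nseq ltnNge.
  rewrite (_ : m <= k - size u) /=; last by lia.
  by move=> ek; move: xv; rewrite -{1}ek mem_nth //; lia.
rewrite E nth_cat ltnNge (leq_trans ui (ltnW ij)) /= nth_cat size_nseq.
by rewrite (_ : j - size u < m) ?nth_nseq ?ifT //; lia.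
Qed.

End Contiguous.

Section Avoidance.
Variable A : eqType.
Implicit Types (x y : A) (u w s : seq A).

Lemma contains_abaP w :
  reflect (exists x y, x != y /\ subseq [:: x; y; x] w) (contains_aba w).
Proof.
apply: (iffP hasP).
  by case=> [[x y]] _ /= /andP [xy S]; exists x, y.
case=> x [y [xy S]]; exists (x, y) => /=; last by rewrite xy.
apply/allpairsP; exists (x, y); split => //=; apply: (mem_subseq S).
  by rewrite inE eqxx.
by rewrite !inE eqxx orbT.
Qed.

Lemma avoids_aba_subseq u w : subseq u w -> avoids_aba w -> avoids_aba u.
Proof.
move=> S; apply: contra => /contains_abaP [x [y [xy S']]]; apply/contains_abaP.
by exists x, y; split => //; apply: subseq_trans S.
Qed.

Lemma avoids_aba1 x : avoids_aba [:: x].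
Proof. by rewrite /avoids_aba /contains_aba /= eqxx. Qed.

Lemma avoids_aba_nseq n x : avoids_aba (nseq n x).
Proof.
apply/negP => /contains_abaP [y [z [yz /mem_subseq M]]].
have /M : y \in [:: y; z; y] by rewrite inE eqxx.
have /M : z \in [:: y; z; y] by rewrite !inE eqxx orbT.
rewrite !mem_nseq => /andP [_ /eqP ez] /andP [_ /eqP ey].
by rewrite ey ez eqxx in yz.
Qed.

Lemma avoids_aba_cons x s : avoids_aba s ->
  avoids_aba (x :: s) = (x \notin s) || (ohead s == Some x).
Proof.
move=> Hs; apply/idP/idP.
  apply: contraLR; rewrite negb_or negbK; case: s Hs => [//|y s] Hs /andP [xin hy].
  have xy : x != y by apply: contraNneq hy => ->.
  move: xin; rewrite inE (negbTE xy) /= => xs.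
  by apply/negPn/contains_abaP; exists x, y; rewrite /= !eqxx sub1seq.
move=> H; apply/negP => /contains_abaP [b [c [bc]]] /=.
case: (eqVneq b x) => [ebx|nbx] S; last first.
  by move/negP: Hs; apply; apply/contains_abaP; exists b, c.
subst b; have xs : x \in s by apply: (mem_subseq S); rewrite !inE eqxx orbT.
move: H; rewrite xs /=; case: s Hs S xs => [//|y s] Hs S _ /eqP [eyx]; subst y.
move: S => /=; rewrite eq_sym (negbTE bc) => S.
by move/negP: Hs; apply; apply/contains_abaP; exists x, c; rewrite /= eqxx S.
Qed.

End Avoidance.


Section Machine.
Variable A : eqType.
Implicit Types (x y a : A) (v w inp stk s T B rest : seq A).

Fixpoint run (n : nat) (inp stk : seq A) : seq A :=
  match n with
  | 0 => [::]
  | n'.+1 =>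
    match inp with
    | x :: inp' => if avoids_aba (x :: stk) then run n' inp' (x :: stk)
                   else if stk is y :: stk' then y :: run n' inp stk' else [::]
    | [::] => if stk is y :: stk' then y :: run n' [::] stk' else [::]
    end
  end.

Lemma iter_phi_step n inp stk out :
  (iter n (@phi_step A) (inp, stk, out)).2 = out ++ run n inp stk.
Proof.
elim: n inp stk out => [|n IH] inp stk out; first by rewrite /= cats0.
rewrite iterSr; case: inp => [|x inp'].
  by case: stk => [|y stk']; rewrite [phi_step _]/= IH ?cat_rcons //; case: n {IH}.
rewrite [phi_step _]/=; case: ifP => Hav; first by rewrite IH /= Hav.
case: stk Hav => [|y stk'] Hav; first by rewrite avoids_aba1 in Hav.
by rewrite IH /= Hav cat_rcons.
Qed.

Definition fuel inp stk := 2 * size inp + size stk.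
Definition output inp stk := run (fuel inp stk) inp stk.
Definition phi w := output w [::].

Lemma phi_abaE w : phi_aba w = phi w.
Proof. by rewrite /phi_aba iter_phi_step /phi /output /fuel addn0. Qed.

Lemma output_drain y s : output [::] (y :: s) = y :: output [::] s.
Proof. by []. Qed.

Lemma output_push x inp s :
  avoids_aba (x :: s) -> output (x :: inp) s = output inp (x :: s).
Proof.
move=> H; rewrite /output (_ : fuel (x :: inp) s = (fuel inp (x :: s)).+1) /=.
  by rewrite H.
by rewrite /fuel /=; lia.
Qed.

Lemma output_pop x y inp s : ~~ avoids_aba (x :: y :: s) ->
  output (x :: inp) (y :: s) = y :: output (x :: inp) s.
Proof.
move=> H; rewrite /output (_ : fuel (x :: inp) (y :: s) = (fuel (x :: inp) s).+1) /=.
  by rewrite (negbTE H).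
by rewrite /fuel /=; lia.
Qed.

Lemma output_stack s : output [::] s = s.
Proof. by elim: s => [|y s IH]; rewrite ?output_drain ?IH. Qed.

Lemma perm_output inp stk : perm_eq (output inp stk) (inp ++ stk).
Proof.
move: {2}(fuel inp stk) (leqnn (fuel inp stk)) => n.
elim: n inp stk => [|n IH] [|x inp] stk; rewrite ?output_stack // /fuel /= => Hn.
case: (boolP (avoids_aba (x :: stk))) => Hav.
  rewrite output_push //; apply: perm_trans (IH _ _ _) _; last by rewrite -cat1s perm_catCA.
  by rewrite /fuel /=; lia.
case: stk Hav Hn => [|y s] Hav Hn; first by rewrite avoids_aba1 in Hav.
rewrite output_pop // perm_sym -(perm_catCA [:: y] (x :: inp) s) /= perm_cons perm_sym.
by apply: IH; move: Hn; rewrite /fuel /=; lia.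
Qed.

Lemma perm_phi w : perm_eq (phi w) w.
Proof. by have := perm_output w [::]; rewrite cats0. Qed.

Lemma mem_phi x w : (x \in phi w) = (x \in w).
Proof. by rewrite (perm_mem (perm_phi w)). Qed.

Lemma mem_output x inp stk : (x \in output inp stk) = (x \in inp) || (x \in stk).
Proof. by rewrite (perm_mem (perm_output inp stk)) mem_cat. Qed.

(* Letters of [v] and [T] never interact with a stack bottom [B] of other letters: they are
   pushed above [B] and popped before the first letter of [rest] (a letter of [B]) arrives. *)
Lemma output_cat_block v T B rest :
  (forall z, z \in v ++ T -> z \notin B) -> avoids_aba (T ++ B) ->
  (if rest is x :: _ then x \in B else true) ->
  output (v ++ rest) (T ++ B) = output v T ++ output rest B.
Proof.
move: {2}(fuel v T) (leqnn (fuel v T)) => n.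
elim: n v T rest => [|n IH] v T rest.
  by rewrite leqn0 /fuel; case: v => [|//]; case: T => [|//].
case: v => [|x v].
  case: T => [|y T] Hn Hd Hav Hr //.
  have yB : y \notin B by apply: Hd; rewrite inE eqxx.
  have Hn' : fuel [::] T <= n by move: Hn; rewrite /fuel /=; lia.
  have Hd' z : z \in [::] ++ T -> z \notin B by move=> zT; apply: Hd; rewrite inE zT orbT.
  have HT := avoids_aba_subseq (subseq_cons _ _) Hav.
  case: rest Hr => [|x r] Hr.
    by rewrite cats0 cat_cons !output_drain; have /= -> := IH [::] T [::] Hn' Hd' HT isT.
  rewrite cat0s cat_cons output_pop; last first.
    rewrite avoids_aba_cons // negb_or negbK !inE mem_cat Hr !orbT /=.
    by apply/eqP => -[E]; rewrite E Hr in yB.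
  by rewrite output_drain; have /= -> := IH [::] T (x :: r) Hn' Hd' HT Hr.
move=> Hn Hd Hav Hr.
have xB : x \notin B by apply: Hd; rewrite inE eqxx.
have Heq : avoids_aba (x :: T ++ B) = avoids_aba (x :: T).
  rewrite !avoids_aba_cons ?(avoids_aba_subseq (prefix_subseq _ _) Hav) //.
  by rewrite mem_cat (negbTE xB) orbF; case: T {Hn Hd Hav} => [|t T] //=; rewrite ?orbT.
have [Hx|Hx] := boolP (avoids_aba (x :: T)).
  rewrite cat_cons output_push; last by rewrite Heq.
  rewrite -cat_cons (IH v (x :: T) rest) ?output_push //.
  - by move: Hn; rewrite /fuel /=; lia.
  - move=> z; rewrite mem_cat inE => /or3P [zv|/eqP ->|zT] //.
    + by apply: Hd; rewrite mem_cat inE zv orbT.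
    + by apply: Hd; rewrite mem_cat inE zT !orbT.
  - by rewrite Heq.
case: T Hn Hd Hav Heq Hx => [|y T] Hn Hd Hav Heq Hx; first by rewrite avoids_aba1 in Hx.
rewrite !cat_cons output_pop; last by rewrite -cat_cons Heq.
have H1 : fuel (x :: v) T <= n by move: Hn; rewrite /fuel /=; lia.
have H2 z : z \in (x :: v) ++ T -> z \notin B.
  by rewrite mem_cat => /orP [zv|zT]; apply: Hd; rewrite mem_cat ?zv // !inE zT !orbT.
have H3 := avoids_aba_subseq (subseq_cons _ _) Hav.
by rewrite -cat_cons (IH (x :: v) T rest H1 H2 H3 Hr) (output_pop v Hx).
Qed.

Lemma phi_cons a r : phi (a :: r) = output r (nseq 1 a).
Proof. by rewrite /phi output_push // avoids_aba1. Qed.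

Lemma output_block_cons a j r : output (a :: r) (nseq j a) = output r (nseq j.+1 a).
Proof. by rewrite output_push // -[a :: nseq j a]/(nseq j.+1 a) avoids_aba_nseq. Qed.

Lemma output_nseq_cat a k j r :
  output (nseq k a ++ r) (nseq j a) = output r (nseq (k + j) a).
Proof.
elim: k j => [//|k IH] j; rewrite cat_cons output_block_cons IH.
by congr (output _ (nseq _ _)); lia.
Qed.

Lemma output_block a j v rest : 0 < j -> a \notin v ->
  (if rest is x :: _ then x == a else true) ->
  output (v ++ rest) (nseq j a) = phi v ++ output rest (nseq j a).
Proof.
move=> j0 av Hr; rewrite -[nseq j a]cat0s output_cat_block ?avoids_aba_nseq //.
- by move=> z; rewrite cats0 mem_nseq negb_and => zv; apply/orP; right; apply: contraNneq av => <-.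
- by case: rest Hr => [|x r] //= /eqP ->; rewrite mem_nseq eqxx andbT.
Qed.

Lemma output_block_notin a j r : a \notin r -> output r (nseq j a) = phi r ++ nseq j a.
Proof.
case: j => [|j] ar; first by rewrite cats0.
by rewrite -[r]cats0 output_block // cats0 output_stack.
Qed.

Lemma output_block_split a j v r : 0 < j -> a \notin v ->
  output (v ++ a :: r) (nseq j a) = phi v ++ output r (nseq j.+1 a).
Proof. by move=> j0 av; rewrite output_block //= ?eqxx // output_block_cons. Qed.

Lemma phi_nseq_cat a k r : 0 < k -> a \notin r -> phi (nseq k a ++ r) = phi r ++ nseq k a.
Proof.
by case: k => [//|k] _ ar; rewrite cat_cons phi_cons output_nseq_cat output_block_notin ?addn1.
Qed.

Lemma phi_uniq v : uniq v -> phi v = rev v.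
Proof.
elim: v => [//|b v IH] /= /andP [bv uv].
by rewrite phi_cons output_block_notin // IH // rev_cons -cats1.
Qed.

Lemma phi_double a w1 w2 : a \notin w1 -> a \notin w2 ->
  phi (a :: w1 ++ a :: w2) = phi w1 ++ phi w2 ++ [:: a; a].
Proof. by move=> a1 a2; rewrite phi_cons output_block_split // output_block_notin. Qed.

Lemma output_block_suffix r a j : 0 < j ->
  exists X, output r (nseq j a) = X ++ nseq (j + count_mem a r) a /\ a \notin X.
Proof.
elim: {r}(size r) {-2}r (leqnn (size r)) j => [|n IH] r Hs j j0.
  by move: Hs; rewrite leqn0 size_eq0 => /eqP ->; exists [::]; rewrite output_stack addn0.
have [ar|ar] := boolP (a \in r); last first.
  by exists (phi r); rewrite output_block_notin // mem_phi (count_memPn ar) addn0.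
have [v [r' [Er av]]] := split_first ar; subst r.
have [|X [EX aX]] := IH r' _ j.+1 isT; first by move: Hs; rewrite size_cat /=; lia.
exists (phi v ++ X); rewrite output_block_split // EX catA mem_cat mem_phi negb_or av aX.
by rewrite count_cat /= eqxx (count_memPn av) addnS.
Qed.

Lemma contiguous_output_block r a j : 0 < j -> contiguous a (output r (nseq j a)).
Proof.
move=> j0; have [X [-> aX]] := output_block_suffix r a j0.
by rewrite contiguous_catl // contiguous_nseq.
Qed.

Lemma contiguous_output r a j x : 0 < j ->
  contiguous x (nseq j a ++ r) -> contiguous x (output r (nseq j a)).
Proof.
elim: {r}(size r) {-2}r (leqnn (size r)) a j => [|n IH] r Hs a j j0.
  by move: Hs; rewrite leqn0 size_eq0 => /eqP ->; rewrite output_stack cats0.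
have [->|xa] := eqVneq x a; first by move=> _; apply: contiguous_output_block.
have IHphi w : size w <= n.+1 -> contiguous x w -> contiguous x (phi w).
  by case: w => [//|b w] Hw; rewrite phi_cons; apply: (IH w Hw b 1).
rewrite contiguous_nseq_cat // => H.
have [ar|ar] := boolP (a \in r); last first.
  by rewrite output_block_notin // contiguous_catr ?mem_nseq ?negb_and ?xa ?orbT // IHphi.
have [v [r' [Er av]]] := split_first ar; subst r.
have Hs' : size r' <= n by move: Hs; rewrite size_cat /=; lia.
rewrite output_block_split //; have [xv|xv] := boolP (x \in v).
  have xr' : x \notin r' := contiguous_sep H xa xv.
  rewrite contiguous_catr; last by rewrite mem_output negb_or xr' mem_nseq negb_and xa.
  apply: IHphi; first by move: Hs; rewrite size_cat; lia.
  by move: H; rewrite contiguous_catr // inE negb_or xa.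
rewrite contiguous_catl ?mem_phi //; apply: IH => //.
by move: H; rewrite contiguous_catl // -cat1s contiguous_catl ?inE // contiguous_nseq_cat.
Qed.

Lemma contiguous_phi x w : contiguous x w -> contiguous x (phi w).
Proof. by case: w => [//|b w] H; rewrite phi_cons; apply: contiguous_output. Qed.

Lemma output_sorts_letter r a j : 0 < j ->
  (exists x, ~~ contiguous x (nseq j a ++ r)) ->
  exists c, ~~ contiguous c (nseq j a ++ r) /\ contiguous c (output r (nseq j a)).
Proof.
elim: {r}(size r) {-2}r (leqnn (size r)) a j => [|n IH] r Hs a j j0 [x Hx].
  by move: Hs Hx; rewrite leqn0 size_eq0 => /eqP ->; rewrite cats0 contiguous_nseq.
have [Ha|Ha] := boolP (contiguous a (nseq j a ++ r)); last first.
  by exists a; split => //; apply: contiguous_output_block.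
have [ar|ar] := boolP (a \in r).
  have [v [r' [Er av]]] := split_first ar; subst r.
  have v0 := contiguous_block_gap j0 av Ha; subst v.
  rewrite output_block_cons nseq_cat_cons; apply: IH => //.
  by exists x; rewrite -nseq_cat_cons.
have xa : x != a by apply: contraNneq Hx => ->.
rewrite contiguous_nseq_cat // in Hx.
have [c [Hc1 Hc2]] : exists c, ~~ contiguous c r /\ contiguous c (phi r).
  case: r Hs Hx {Ha ar} => [|b r] Hs Hx; first by rewrite notin_contiguous in Hx.
  by rewrite phi_cons; apply: (IH r Hs b 1) => //; exists x.
have cr : c \in r by apply: contraR Hc1 => /notin_contiguous.
have ca : c != a by apply: contraNneq ar => <-.
exists c; rewrite contiguous_nseq_cat // output_block_notin // contiguous_catr //.
by rewrite mem_nseq negb_and ca orbT.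
Qed.

Lemma phi_sorts_letter w : (exists x, ~~ contiguous x w) ->
  exists c, ~~ contiguous c w /\ contiguous c (phi w).
Proof.
case: w => [|b w] [y Hy]; first by rewrite notin_contiguous in Hy.
by rewrite phi_cons; apply: (@output_sorts_letter w b 1) => //; exists y.
Qed.

Lemma filter_output (P : pred A) r a j : 0 < j ->
  (forall x, ~~ P x -> contiguous x (nseq j a ++ r)) ->
  filter P (output r (nseq j a)) = output (filter P r) (filter P (nseq j a)).
Proof.
elim: {r}(size r) {-2}r (leqnn (size r)) a j => [|n IH] r Hs a j j0 HP.
  by move: Hs; rewrite leqn0 size_eq0 => /eqP ->; rewrite !output_stack.
have IHphi w : size w <= n.+1 -> (forall x, ~~ P x -> contiguous x w) ->
    filter P (phi w) = phi (filter P w).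
  case: w => [//|b w] Hw HPw; rewrite phi_cons (IH w Hw b 1) //=.
  by case: (P b); rewrite // phi_cons.
have Hr x : ~~ P x -> x != a -> contiguous x r.
  by move=> Px xa; rewrite -(contiguous_nseq_cat j r xa) HP.
have [ar|ar] := boolP (a \in r); last first.
  have Hr' x : ~~ P x -> contiguous x r.
    by move=> Px; have [->|] := eqVneq x a; [apply: notin_contiguous | apply: Hr].
  rewrite output_block_notin // filter_cat IHphi // filter_nseq output_block_notin //.
  by rewrite mem_filter negb_and ar orbT.
have [v [r' [Er av]]] := split_first ar; subst r.
have [Pa|Pa] := boolP (P a); last first.
  have v0 := contiguous_block_gap j0 av (HP a Pa); subst v.
  rewrite output_block_cons IH //= ?(negbTE Pa) ?filter_nseq ?(negbTE Pa) //.
  by move=> x /HP; rewrite nseq_cat_cons.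
have Hsep x : ~~ P x -> contiguous x v && contiguous x r'.
  move=> Px; have xa : x != a by apply: contraNneq Px => ->.
  exact: contiguous_cat_sep xa (Hr x Px xa).
rewrite output_block_split // filter_cat IHphi; last 2 first.
- by move: Hs; rewrite size_cat; lia.
- by move=> x /Hsep /andP [].
rewrite IH; last 3 first.
- by move: Hs; rewrite size_cat /=; lia.
- by [].
- move=> x Px; have xa : x != a by apply: contraNneq Px => ->.
  by rewrite contiguous_nseq_cat //; have /andP [] := Hsep x Px.
rewrite filter_cat /= Pa !filter_nseq Pa !mul1n output_block_split //.
by rewrite mem_filter negb_and av orbT.
Qed.

Lemma filter_phi (P : pred A) w : (forall x, ~~ P x -> contiguous x w) ->
  filter P (phi w) = phi (filter P w).
Proof.
case: w => [//|b w] HP; rewrite phi_cons (@filter_output P w b 1) //=.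
by case: (P b); rewrite // phi_cons.
Qed.

End Machine.

Section UnsortedLetters.
Variable A : eqType.
Implicit Types (x y a c : A) (u v w r s t : seq A).

Definition unsorted_part w := [seq x <- w | ~~ contiguous x w].
Definition unsorted_letters w := undup (unsorted_part w).
Definition at_most_twice w := forall x, count_mem x w <= 2.

Local Notation U := unsorted_letters.

Lemma mem_unsorted_letters x w : (x \in U w) = ~~ contiguous x w.
Proof.
rewrite mem_undup mem_filter andbC; case: (boolP (x \in w)) => //= xw.
by rewrite notin_contiguous.
Qed.

Lemma unsorted_letters_sub_undup w : {subset U w <= undup w}.
Proof.
by move=> x; rewrite mem_unsorted_letters mem_undup; apply: contraR; apply: notin_contiguous.
Qed.

Lemma unsorted_letters_phi_sub w : {subset U (phi w) <= U w}.
Proof. by move=> x; rewrite !mem_unsorted_letters; apply: contra; apply: contiguous_phi. Qed.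

Lemma size_unsorted_letters_phi w : size (U (phi w)) <= size (U w).
Proof. exact: uniq_leq_size (undup_uniq _) (@unsorted_letters_phi_sub w). Qed.

Lemma unsorted_letters_phi_rem c w :
  contiguous c (phi w) -> {subset U (phi w) <= rem c (U w)}.
Proof.
move=> Hc x xU; rewrite (mem_rem_uniq _ (undup_uniq _)) inE (unsorted_letters_phi_sub xU).
by rewrite andbT; apply: contraTneq xU => ->; rewrite mem_unsorted_letters Hc.
Qed.

Lemma size_unsorted_letters_phi_lt w : 0 < size (U w) -> size (U (phi w)) < size (U w).
Proof.
case E: (U w) => [//|y l] _; rewrite -E.
have : y \in U w by rewrite E inE eqxx.
rewrite mem_unsorted_letters => Hy.
have [c [Hc1 Hc2]] := phi_sorts_letter (ex_intro _ y Hy).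
have cU : c \in U w by rewrite mem_unsorted_letters.
apply: leq_ltn_trans (uniq_leq_size (undup_uniq _) (unsorted_letters_phi_rem Hc2)) _.
by rewrite size_rem // ltn_predL; case: (U w) cU.
Qed.

Lemma unsorted_letters_nil_sorted w : U w = [::] -> sorted_sp w.
Proof.
move=> HU; apply: sorted_sp_contiguous => x; apply/negPn/negP.
by rewrite -mem_unsorted_letters HU.
Qed.

Lemma unsorted_letters_phi_other c x w :
  size (U w) <= (size (U (phi w))).+1 -> ~~ contiguous c w -> contiguous c (phi w) ->
  ~~ contiguous x w -> x != c -> ~~ contiguous x (phi w).
Proof.
move=> HU Hc Hcphi; rewrite -!mem_unsorted_letters => xU xc.
have sub := unsorted_letters_phi_rem Hcphi.
have cU : c \in U w by rewrite mem_unsorted_letters.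
have Hsz : size (rem c (U w)) <= size (U (phi w)) by rewrite size_rem //; lia.
have [_ Eq] := uniq_min_size (undup_uniq _) sub Hsz.
by rewrite Eq (mem_rem_uniq _ (undup_uniq _)) inE xc.
Qed.

Section DoubleOccurrence.
Variables (a : A) (w1 w2 : seq A).
Hypotheses (a1 : a \notin w1) (a2 : a \notin w2).
Let W := a :: w1 ++ a :: w2.
Hypotheses (twiceW : at_most_twice W) (Ha : ~~ contiguous a W).
Hypothesis one_sorted : size (U W) <= (size (U (phi W))).+1.

Let Q x := ~~ contiguous x W.

Lemma count_double x : x != a -> count_mem x w1 + count_mem x w2 <= 2.
Proof. by move=> xa; have := twiceW x; rewrite /W /= count_cat /= eq_sym (negbTE xa). Qed.

Lemma contiguous_double_l x : x != a -> x \notin w2 -> contiguous x W = contiguous x w1.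
Proof.
move=> xa x2; rewrite /W -cat1s contiguous_catl ?inE //.
by rewrite contiguous_catr // inE negb_or xa.
Qed.

Lemma contiguous_double_r x : x != a -> x \notin w1 -> contiguous x W = contiguous x w2.
Proof.
move=> xa x1; rewrite /W -cat1s catA -cat_rcons contiguous_catl //.
by rewrite mem_rcons /= !inE (negbTE xa) (negbTE x1).
Qed.

Lemma contiguous_phi_double_l x :
  x != a -> x \notin w2 -> contiguous x (phi W) = contiguous x (phi w1).
Proof.
move=> xa x2; rewrite phi_double // contiguous_catr //.
by rewrite mem_cat mem_phi negb_or x2 !inE (negbTE xa).
Qed.

Lemma contiguous_phi_double_r x :
  x != a -> x \notin w1 -> contiguous x (phi W) = contiguous x (phi w2).
Proof.
move=> xa x1; rewrite phi_double // contiguous_catl ?mem_phi // contiguous_catr //.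
by rewrite !inE (negbTE xa).
Qed.

Lemma contiguous_phi_double_a : contiguous a (phi W).
Proof.
rewrite phi_double // catA contiguous_catl; first exact: (contiguous_nseq a 2 a).
by rewrite mem_cat !mem_phi negb_or a1 a2.
Qed.

Lemma unsorted_phi_double x : x != a -> ~~ contiguous x (phi W) = Q x.
Proof.
move=> xa; apply/idP/idP; first by apply: contra; apply: contiguous_phi.
by move=> Hx; apply: unsorted_letters_phi_other contiguous_phi_double_a Hx xa.
Qed.

(* An unsorted letter living in one half only would, by [phi_sorts_letter], let a second
   letter be sorted in the same pass. *)
Lemma unsorted_in_other wi wj :
  a \notin wi -> (forall x, x != a -> count_mem x wi + count_mem x wj <= 2) ->
  (forall x, x != a -> x \notin wj -> contiguous x W = contiguous x wi) ->
  (forall x, x != a -> x \notin wj -> contiguous x (phi W) = contiguous x (phi wi)) ->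
  forall x, x != a -> Q x -> x \in wj.
Proof.
move=> ai cnt EW EphiW x xa Qx; apply/negPn/negP => xj.
move: Qx; rewrite /Q EW // => Hx.
have [c [Hc1 Hc2]] := phi_sorts_letter (ex_intro _ x Hx).
have ci : c \in wi by apply: contraR Hc1 => /notin_contiguous.
have ca : c != a by apply: contraTneq ci => ->.
have cj : c \notin wj.
  by apply/count_memPn; have := cnt c ca; have := noncontiguous_count Hc1; lia.
by have := unsorted_phi_double ca; rewrite /Q EW // EphiW // Hc2 Hc1.
Qed.

Lemma unsorted_in_both x : x != a -> Q x -> (x \in w1) && (x \in w2).
Proof.
move=> xa Qx; apply/andP; split.
  apply: (unsorted_in_other a2 _ contiguous_double_r contiguous_phi_double_r) => //.
  by move=> y ya; rewrite addnC count_double.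
exact: (unsorted_in_other a1 count_double contiguous_double_l contiguous_phi_double_l).
Qed.

Lemma uniq_unsorted_half wi wj :
  a \notin wi -> (forall x, x != a -> count_mem x wi + count_mem x wj <= 2) ->
  (forall x, x != a -> Q x -> x \in wj) -> uniq (filter Q wi).
Proof.
move=> ai cnt inj; apply: count_mem_uniq => x.
have [xf|xf] := boolP (x \in filter Q wi); last exact/count_memPn.
move: (xf); rewrite mem_filter => /andP [Qx xi].
have xa : x != a by apply: contraNneq ai => <-.
have := cnt x xa; have : 0 < count_mem x wj by rewrite -has_count has_pred1 inj.
have : count_mem x (filter Q wi) <= count_mem x wi.
  by rewrite count_filter; apply: sub_count => y /andP [].
have : 0 < count_mem x (filter Q wi) by rewrite -has_count has_pred1.
by lia.
Qed.

Lemma contiguous_halves x : ~~ Q x -> contiguous x w1 && contiguous x w2.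
Proof.
rewrite /Q negbK; have [->|xa] := eqVneq x a; first by rewrite !(notin_contiguous a1, notin_contiguous a2).
rewrite /W -cat_cons => /(contiguous_cat_sep xa).
by rewrite -cat1s contiguous_catl // inE.
Qed.

Lemma unsorted_part_double : unsorted_part W = a :: filter Q w1 ++ a :: filter Q w2.
Proof.
have Qa : Q a := Ha.
by rewrite (_ : unsorted_part W = filter Q W) // {1}/W /= Qa filter_cat /= Qa.
Qed.

Lemma uniq_unsorted_w1 : uniq (filter Q w1).
Proof.
apply: uniq_unsorted_half a1 count_double _ => x xa Qx.
by have /andP [] := unsorted_in_both xa Qx.
Qed.

Lemma uniq_unsorted_w2 : uniq (filter Q w2).
Proof.
apply: (@uniq_unsorted_half w2 w1 a2) => [x xa|x xa Qx]; first by rewrite addnC count_double.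
by have /andP [] := unsorted_in_both xa Qx.
Qed.

Lemma unsorted_part_phi_double :
  unsorted_part (phi W) = rev (filter Q w1) ++ rev (filter Q w2).
Proof.
have Ehalf wi : a \notin wi -> (forall x, ~~ Q x -> contiguous x wi) -> uniq (filter Q wi) ->
    [seq x <- phi wi | ~~ contiguous x (phi W)] = rev (filter Q wi).
  move=> ai Hc Ui; rewrite -phi_uniq // -filter_phi //.
  apply: eq_in_filter => x; rewrite mem_phi => xi.
  by apply: unsorted_phi_double; apply: contraNneq ai => <-.
rewrite /unsorted_part {2}phi_double // !filter_cat -/W /= contiguous_phi_double_a cats0.
rewrite (Ehalf w1) ?(Ehalf w2) ?uniq_unsorted_w1 ?uniq_unsorted_w2 //.
  by move=> x /contiguous_halves /andP [].
by move=> x /contiguous_halves /andP [].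
Qed.

Lemma unsorted_part_double_lift s : unsorted_part (phi W) = s ++ s ->
  exists t, uniq t /\ unsorted_part W = t ++ t.
Proof.
rewrite unsorted_part_phi_double => E.
have Hsz : size (filter Q w1) = size (filter Q w2).
  apply/perm_size/uniq_perm; rewrite ?uniq_unsorted_w1 ?uniq_unsorted_w2 // => x.
  rewrite !mem_filter; have [Qx|] := boolP (Q x); rewrite //=.
  have [->|xa] := eqVneq x a; first by rewrite (negbTE a1) (negbTE a2).
  by have /andP [-> ->] := unsorted_in_both xa Qx.
have Es : size (rev (filter Q w1)) = size s.
  by have := congr1 size E; rewrite !size_cat !size_rev Hsz; lia.
move/eqP: E; rewrite eqseq_cat // => /andP [/eqP E1 /eqP E2].
exists (a :: filter Q w1); split; first by rewrite /= uniq_unsorted_w1 mem_filter negb_and a1 orbT.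
by rewrite unsorted_part_double -[filter Q w1]revK E1 -E2 revK.
Qed.

End DoubleOccurrence.

Lemma unsorted_part_cat u v : (forall x, x \in u -> x \notin v) ->
  unsorted_part (u ++ v) = unsorted_part u ++ unsorted_part v.
Proof.
move=> uv; rewrite /unsorted_part filter_cat; congr (_ ++ _); apply: eq_in_filter => x xw.
  by rewrite contiguous_catr ?uv.
by rewrite contiguous_catl //; apply: contraTN xw; apply: uv.
Qed.

Lemma unsorted_part_nseq k a : unsorted_part (nseq k a) = [::].
Proof.
rewrite /unsorted_part (eq_in_filter (a2 := pred0)) ?filter_pred0 // => x _.
by rewrite contiguous_nseq.
Qed.

Lemma unsorted_part_lift w s : at_most_twice w ->
  size (U w) <= (size (U (phi w))).+1 -> unsorted_part (phi w) = s ++ s ->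
  exists t, uniq t /\ unsorted_part w = t ++ t.
Proof.
elim: {w}(size w) {-2}w (leqnn (size w)) => [|n IH] [|a r] //= Hs twice HU HR;
  try by exists [::]; split.
have [Ha|Ha] := boolP (contiguous a (a :: r)).
  have [k [r' [k0 Ew ar']]] := contiguous_head Ha.
  have disj x : x \in nseq k a -> x \notin r' by rewrite mem_nseq => /andP [_ /eqP ->].
  have disj' x : x \in phi r' -> x \notin nseq k a.
    by rewrite mem_phi mem_nseq negb_and => xr; apply/orP; right; apply: contraNneq ar' => <-.
  have ER : unsorted_part (a :: r) = unsorted_part r'.
    by rewrite Ew unsorted_part_cat // unsorted_part_nseq.
  have ERphi : unsorted_part (phi (a :: r)) = unsorted_part (phi r').
    by rewrite Ew phi_nseq_cat // unsorted_part_cat // unsorted_part_nseq cats0.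
  have Hs' : size r' <= n by have := congr1 size Ew; rewrite size_cat size_nseq /=; lia.
  have twice' : at_most_twice r'.
    by move=> x; apply: leq_trans (twice x); rewrite Ew count_cat leq_addl.
  have HU' : size (U r') <= (size (U (phi r'))).+1 by move: HU; rewrite /U ER ERphi.
  have [t [ut Et]] := IH r' Hs' twice' HU' (etrans (esym ERphi) HR).
  by exists t; rewrite ER.
have twice_a : count_mem a (a :: r) = 2.
  by have := twice a; have := noncontiguous_count Ha; lia.
have ar : a \in r by rewrite -has_pred1 has_count; move: twice_a => /=; rewrite eqxx; lia.
have [w1 [w2 [Er a1]]] := split_first ar; subst r.
have a2 : a \notin w2.
  by apply/count_memPn; move: twice_a; rewrite /= count_cat /= eqxx (count_memPn a1); lia.
exact: (unsorted_part_double_lift a1 a2 twice Ha HU HR).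
Qed.

Lemma unsorted_part_square m w : at_most_twice w ->
  (forall k, k < m -> size (U (iter k (@phi A) w)) <= (size (U (iter k.+1 (@phi A) w))).+1) ->
  U (iter m (@phi A) w) = [::] -> exists t, uniq t /\ unsorted_part w = t ++ t.
Proof.
elim: m w => [|m IH] w twice Hstep HU.
  by exists [::]; split => //; apply: undup_nil.
have twice' : at_most_twice (phi w) by move=> x; rewrite (permP (perm_phi w)).
have Hstep' k : k < m ->
    size (U (iter k (@phi A) (phi w))) <= (size (U (iter k.+1 (@phi A) (phi w)))).+1.
  by move=> km; rewrite -!iterSr; apply: Hstep.
have HU' : U (iter m (@phi A) (phi w)) = [::] by rewrite -iterSr.
have [s [_ Es]] := IH (phi w) twice' Hstep' HU'.
exact: unsorted_part_lift twice (Hstep 0 isT) Es.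
Qed.

End UnsortedLetters.

Lemma sumn_ge_double (l : seq nat) : {in l, forall m, 1 < m} -> 2 * size l <= sumn l.
Proof.
elim: l => [//|z l IH] ge2 /=; have := ge2 z (mem_head _ _).
have ge2l : {in l, forall m, 1 < m} by move=> m ml; apply: ge2; rewrite inE ml orbT.
by have := IH ge2l; lia.
Qed.

Lemma sumn_le_double (l : seq nat) :
  {in l, forall m, 1 < m} -> sumn l <= 2 * size l -> {in l, forall m, m <= 2}.
Proof.
elim: l => [//|z l IH] ge2 /= Hs m.
have ge2l : {in l, forall m, 1 < m} by move=> k kl; apply: ge2; rewrite inE kl orbT.
have := ge2 z (mem_head _ _); have := sumn_ge_double ge2l => Hl Hz.
rewrite inE => /orP [/eqP ->|ml]; first by lia.
by apply: IH ml => //; lia.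
Qed.

Lemma sumn_count_undup (A : eqType) (p : seq A) :
  sumn [seq count_mem x p | x <- undup p] = size p.
Proof.
rewrite -(perm_size (perm_count_undup p)) size_flatten /shape -map_comp.
by apply: congr1; apply: eq_map => x /=; rewrite size_nseq.
Qed.

Lemma at_most_twice_of_size (A : eqType) (p : seq A) :
  {in p, forall x, 1 < count_mem x p} -> size p <= 2 * size (undup p) -> at_most_twice p.
Proof.
move=> ge2 Hsz x; have [xp|xp] := boolP (x \in p); last by rewrite (count_memPn xp).
apply: (sumn_le_double (l := [seq count_mem y p | y <- undup p])).
- by move=> _ /mapP [y yp ->]; apply: ge2; rewrite -mem_undup.
- by rewrite sumn_count_undup size_map.
- by apply: map_f; rewrite mem_undup.
Qed.

Lemma descent_exact (f : nat -> nat) n :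
  (forall k, f k.+1 <= f k) -> (forall k, 0 < f k -> f k.+1 < f k) ->
  f 0 <= n -> 0 < f n.-1 -> forall k, k <= n -> f k = n - k.
Proof.
move=> mono strict f0 fn.
have upper k : f k <= f 0 - k.
  elim: k => [|k IH]; first by rewrite subn0.
  have [fk0|fk] := posnP (f k); last by have := strict k fk; lia.
  by have := mono k; rewrite fk0 leqn0 => /eqP ->.
have lower i j : i <= j -> 0 < f j -> f j + (j - i) <= f i.
  elim: j => [|j IH] ij fj; first by move: ij; rewrite leqn0 => /eqP ->; rewrite addn0.
  have [->|ij'] := eqVneq i j.+1; first by rewrite subnn addn0.
  have ij1 : i <= j by lia.
  have fj' : 0 < f j by apply: leq_trans fj (mono j).
  by have := strict j fj'; have := IH ij1 fj'; lia.
move=> k kn; apply/eqP; rewrite eqn_leq; apply/andP; split.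
  by have := upper k; lia.
have [->|kn'] := eqVneq k n; first by rewrite subnn.
by have := lower k n.-1 ltac:(lia) fn; lia.
Qed.

Theorem theorem1 (A : eqType) (p : seq A) :
  3 <= Nletters p ->
  size p <= 2 * Nletters p ->
  ~ sorted_sp (iter (Nletters p).-1 (@phi_aba A) p) ->
  exists s : seq A,
    uniq s /\ size s = Nletters p /\ sp_equiv p (s ++ s).
Proof.
rewrite /Nletters; set n := size (undup p) => _ Hsz.
rewrite (eq_iter (@phi_abaE A)) => unsorted.
pose f k := size (unsorted_letters (iter k (@phi A) p)).
have Ef : forall k, k <= n -> f k = n - k.
  apply: descent_exact => [k|k||].
  - by rewrite /f iterS; apply: size_unsorted_letters_phi.
  - by rewrite /f iterS; apply: size_unsorted_letters_phi_lt.
  - exact: uniq_leq_size (undup_uniq _) (@unsorted_letters_sub_undup _ p).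
  - by rewrite lt0n size_eq0; apply: contra_notN unsorted => /eqP /unsorted_letters_nil_sorted.
have all_unsorted : {in p, forall x, ~~ contiguous x p}.
  have [|_ Eq] := uniq_min_size (undup_uniq _) (@unsorted_letters_sub_undup _ p).
    by rewrite -/(f 0) Ef ?subn0.
  by move=> x xp; rewrite -mem_unsorted_letters Eq mem_undup.
have twice : at_most_twice p.
  by apply: at_most_twice_of_size Hsz => x /all_unsorted /noncontiguous_count.
have step k : k < n -> f k <= (f k.+1).+1 by move=> kn; rewrite !Ef //; lia.
have sorted_n : unsorted_letters (iter n (@phi A) p) = [::].
  by apply: size0nil; rewrite -/(f n) Ef // subnn.
have [t [ut Et]] := unsorted_part_square twice step sorted_n.
have Ep : p = t ++ t by rewrite -Et; apply/esym/all_filterP/allP.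
exists t; split=> //; split; last by exists id; split; [exists id | rewrite map_id].
rewrite /n Ep undup_cat undup_id // (eq_in_filter (a2 := pred0)) ?filter_pred0 ?cats0 //.
by move=> x ->.
Qed.
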